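(* Let $L$ be a virtual link. Then $L$ is graphical if and only if $L$ is checkerboard colorable.
   Context: A virtual link diagram is a generic immersion of a closed 1-manifold in $\mathbb{R}^2$ whose double points are either real (classical) crossings, with over/under information, or virtual crossings (marked by a small circle); a virtual link is an equivalence class of virtual link diagrams under the generalized Reidemeister moves (classical Reidemeister moves I–III, their purely virtual analogues, and the mixed move in which a strand with only virtual crossings passes over/through a real crossing). A cyclic graph is a finite graph together with a cyclic ordering of the half-edges at each vertex (equivalently, a graph cellularly embedded in a closed orientable surface, or an orientable ribbon graph); a signed cyclic graph additionally has each edge labelled $+$ or $-$. Given a signed cyclic graph $G$, view it as cellularly embedded in a closed oriented surface and perform the medial construction: place a crossing at the midpoint of each edge $e$ and join the crossings around each face, obtaining a link diagram on the surface; the crossing at $e$ is chosen so that, if $e$ is positive, its $B$-smoothing is the one that separates the two sides along $e$ (following the boundaries of the endpoints of $e$) and its $A$-smoothing is the one that connects across $e$; for a negative edge the roles of $A$ and $B$ are exchanged (here $A$- and $B$-smoothings are Kauffman's standard ones). Immersing the surface diagram generically in the plane, with artefacts of the immersion marked as virtual crossings, gives a virtual link diagram; all such diagrams (for all immersions) are called the virtual link diagrams associated with $G$, and they all represent the same virtual link. A virtual link is graphical if it is represented by a virtual link diagram associated with some signed cyclic graph. A virtual link diagram is checkerboard colorable if one can color a small neighbourhood of one side of each arc so that near each real crossing the colored sides alternate around the crossing, and near each virtual crossing the colorings of the two strands pass through independently. A virtual link is checkerboard colorable if it has a checkerboard colorable diagram. *)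

From Stdlib Require Import Relations.
From mathcomp Require Import all_boot all_fingroup.
Set Implicit Arguments. Unset Strict Implicit. Unset Printing Implicit Defensive.

(* Virtual link diagrams up to detour (virtual) moves.                       *)
(* A diagram is given by its real crossings: a finite set of darts (the four *)
(* half-edges at each real crossing), [sg] = counterclockwise successor of a *)
(* dart around its crossing (every crossing is 4-valent), [al] = the other   *)
(* end of the arc (edge between real crossings, possibly passing through     *)
(* virtual crossings) starting at a dart, [ov z] = the strand through z is   *)
(* the over strand (darts z and sg (sg z) lie on the same strand), and       *)
(* [nloops] = number of components without real crossings.                  *)
Record diag := Diag {
  dT : finType;
  sg : dT -> dT;
  al : dT -> dT;
  ov : dT -> bool;
  nloops : nat }.
Arguments sg : clear implicits.
Arguments al : clear implicits.
Arguments ov : clear implicits.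

Definition wf (D : diag) : Prop :=
  (forall z, al D (al D z) = z) /\ (forall z, al D z != z) /\
  (forall z, sg D (sg D (sg D (sg D z))) = z) /\
  (forall z, sg D z != z) /\ (forall z, sg D (sg D z) != z) /\
  (forall z, ov D (sg D z) = ~~ ov D z).

(* isomorphism of diagrams = equality up to virtual (detour) moves *)
Definition diso (D D' : diag) : Prop :=
  exists h : dT D -> dT D',
    bijective h /\ (forall z, h (sg D z) = sg D' (h z)) /\
    (forall z, h (al D z) = al D' (h z)) /\ (forall z, ov D' (h z) = ov D z) /\
    nloops D = nloops D'.

Definition rot4 (i : 'I_4) : 'I_4 := inord (i.+1 %% 4).
Definition i4 (k : nat) : 'I_4 := inord k.

(* Reidemeister I: insert a kink (new crossing c0..c3, loop c1--c2 bounding  *)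
(* a monogon) into the arc from dart x to dart (al x); b = over information. *)
Definition kink (D : diag) (x : dT D) (b : bool) : diag :=
  @Diag (dT D + 'I_4)%type
    (fun z => match z with inl z => inl (sg D z) | inr i => inr (rot4 i) end)
    (fun z => match z with
              | inl z => if z == x then inr (i4 0)
                         else if z == al D x then inr (i4 3) else inl (al D z)
              | inr i => match val i with
                         | 0 => inl x | 1 => inr (i4 2) | 2 => inr (i4 1)
                         | _ => inl (al D x) end end)
    (fun z => match z with inl z => ov D z | inr i => if odd i then ~~ b else b end)
    (nloops D).

(* Reidemeister I on a component without crossings. *)
Definition kinkloop (D : diag) (b : bool) : diag :=
  @Diag (dT D + 'I_4)%type
    (fun z => match z with inl z => inl (sg D z) | inr i => inr (rot4 i) end)
    (fun z => match z with
              | inl z => inl (al D z)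
              | inr i => match val i with
                         | 0 => inr (i4 3) | 1 => inr (i4 2) | 2 => inr (i4 1)
                         | _ => inr (i4 0) end end)
    (fun z => match z with inl z => ov D z | inr i => if odd i then ~~ b else b end)
    (nloops D).-1.

(* Reidemeister II: strand P (arc x -> al x) and strand Q (arc y -> al y),   *)
(* on two distinct arcs, are made to cross twice at new crossings u = (false,_) *)
(* and v = (true,_) bounding a bigon face; P is over at both iff b; o chooses *)
(* the side of P on which the bigon lies.                                    *)
Definition bigon (D : diag) (x y : dT D) (b o : bool) : diag :=
  let u k : dT D + (bool * 'I_4) := inr (false, i4 k) in
  let v k : dT D + (bool * 'I_4) := inr (true, i4 k) in
  @Diag (dT D + (bool * 'I_4))%type
    (fun z => match z with inl z => inl (sg D z) | inr (w, i) => inr (w, rot4 i) end)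
    (fun z => match z with
              | inl z => if z == x then u 0 else if z == al D x then v 2
                         else if z == y then (if o then u 1 else u 3)
                         else if z == al D y then (if o then v 1 else v 3)
                         else inl (al D z)
              | inr (false, i) => match val i with
                         | 0 => inl x | 1 => if o then inl y else v 1
                         | 2 => v 0 | _ => if o then v 3 else inl y end
              | inr (true, i) => match val i with
                         | 0 => u 2 | 1 => if o then inl (al D y) else u 1
                         | 2 => inl (al D x) | _ => if o then u 3 else inl (al D y) end
              end)
    (fun z => match z with inl z => ov D z | inr (_, i) => if odd i then ~~ b else b end)
    (nloops D).

(* Reidemeister III.  f embeds three crossings a,b,c (= 0,1,2), darts (k,i)  *)
(* with sg (k,i) = (k,i+1), forming a triangular face with internal arcs     *)
(* a1-b0, b1-c0, c1-a0.  Strands: P = a3 a1 b0 b2, Q = b3 b1 c0 c2,           *)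
(* R = c3 c1 a0 a2.  The triangle must not be alternating.                   *)
Definition loc (k i : nat) : 'I_3 * 'I_4 := (inord k, inord i).

Definition r3pat (D : diag) (f : 'I_3 * 'I_4 -> dT D) : Prop :=
  injective f /\
  (forall k i, sg D (f (k, i)) = f (k, rot4 i)) /\
  al D (f (loc 0 1)) = f (loc 1 0) /\ al D (f (loc 1 1)) = f (loc 2 0) /\
  al D (f (loc 2 1)) = f (loc 0 0) /\
  (forall p, p \in [:: loc 0 3; loc 1 2; loc 1 3; loc 2 2; loc 2 3; loc 0 2] ->
     forall l, al D (f p) != f l) /\
  (let oa := ov D (f (loc 0 1)) in let ob := ov D (f (loc 1 0)) in
   let oc := ov D (f (loc 2 0)) in ~~ ((ob == oc) && (oa != oc))).

(* the triangle after the move: each strand meets its two crossings in the  *)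
(* reverse order; crossings keep their rotation and over/under data.         *)
Definition r3al (D : diag) (f : 'I_3 * 'I_4 -> dT D) (z : dT D) : dT D :=
  match [pick l | f l == z] with
  | Some l =>
      match val l.1, val l.2 with
      | 1, 0 => al D (f (loc 0 3)) | 0, 1 => al D (f (loc 1 2))
      | 2, 0 => al D (f (loc 1 3)) | 1, 1 => al D (f (loc 2 2))
      | 0, 0 => al D (f (loc 2 3)) | 2, 1 => al D (f (loc 0 2))
      | 1, 2 => f (loc 0 3) | 0, 3 => f (loc 1 2)
      | 2, 2 => f (loc 1 3) | 1, 3 => f (loc 2 2)
      | 0, 2 => f (loc 2 3) | 2, 3 => f (loc 0 2)
      | _, _ => z end
  | None =>
      let w := al D z in
      if w == f (loc 0 3) then f (loc 1 0)
      else if w == f (loc 1 2) then f (loc 0 1)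
      else if w == f (loc 1 3) then f (loc 2 0)
      else if w == f (loc 2 2) then f (loc 1 1)
      else if w == f (loc 2 3) then f (loc 0 0)
      else if w == f (loc 0 2) then f (loc 2 1)
      else w
  end.

Definition r3 (D : diag) (f : 'I_3 * 'I_4 -> dT D) : diag :=
  @Diag (dT D) (sg D) (r3al f) (ov D) (nloops D).

Inductive move : diag -> diag -> Prop :=
| mv_iso D D' : diso D D' -> move D D'
| mv_R1 D x b : move D (@kink D x b)
| mv_R1loop D b : 0 < nloops D -> move D (kinkloop D b)
| mv_R2 D x y b o : y != x -> y != al D x -> move D (@bigon D x y b o)
| mv_R3 D f : @r3pat D f -> move D (@r3 D f).

Definition step (D D' : diag) : Prop := wf D /\ wf D' /\ move D D'.

Definition vequiv : diag -> diag -> Prop := clos_refl_sym_trans diag step.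

(* checkerboard coloring: col z = the colored side of the arc at dart z is *)
(* the corner between z and sg z; colored sides alternate around real      *)
(* crossings and are continuous along arcs.                                *)
Definition checkerboard (D : diag) : Prop :=
  exists col : dT D -> bool,
    forall z, col (sg D z) = ~~ col z /\ col (al D z) = ~~ col z.

(* Signed cyclic graphs: darts (half-edges) gD, grot = cyclic order at       *)
(* vertices (counterclockwise for the surface orientation), ginv = other     *)
(* half of the edge, gsgn = sign of the edge (true = +), giso = number of    *)
(* isolated vertices.                                                        *)
Record scgraph := SCGraph {
  gD : finType;
  grot : {perm gD};
  ginv : gD -> gD;
  gsgn : gD -> bool;
  giso : nat }.
Arguments grot : clear implicits.
Arguments ginv : clear implicits.
Arguments gsgn : clear implicits.

Definition gwf (G : scgraph) : Prop :=
  (forall d, ginv G (ginv G d) = d) /\ (forall d, ginv G d != d) /\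
  (forall d, gsgn G (ginv G d) = gsgn G d).

(* Medial construction: crossing at edge {d, ginv d} has darts (d,true),    *)
(* (d,false), (ginv d,true), (ginv d,false) in counterclockwise order, where *)
(* (d,true) heads to the corner (d, grot d) and (d,false) to the corner     *)
(* (grot^-1 d, d).  For a positive edge the over strand is                  *)
(* {(d,true),(ginv d,true)} (so the A-smoothing connects across the edge).  *)
Definition medial (G : scgraph) : diag :=
  @Diag (gD G * bool)%type
    (fun z => let: (d, s) := z in if s then (d, false) else (ginv G d, true))
    (fun z => let: (c, s) := z in
              if s then (grot G c, false) else (((grot G)^-1)%g c, true))
    (fun z => let: (d, s) := z in s == gsgn G d)
    (giso G).

(* The colored regions and the real crossings of a checkerboard colored
   diagram form a cyclic graph: the two colored darts z and sg (sg z) at a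
   crossing are the half-edges of its edge, and the rotation at a vertex steps
   to the next colored dart along the boundary of the region.  Signing each
   edge by the over/under data of its crossing, the medial diagram of this
   graph is the colored diagram itself up to relabelling of darts.  Conversely
   the medial diagram of a cyclic graph is colored by the corners at its
   vertices. *)
From Stdlib Require Import Relations.
From mathcomp Require Import all_boot all_fingroup.
Set Implicit Arguments. Unset Strict Implicit. Unset Printing Implicit Defensive.

Lemma vequiv_wf (D D' : diag) : vequiv D D' -> wf D <-> wf D'.
Proof.
by elim=> [? ? [? [? _]] | | | ]; tauto.
Qed.

Lemma diso_vequiv (D D' : diag) : wf D -> wf D' -> diso D D' -> vequiv D D'.
Proof. by move=> wfD wfD' iso; apply: rst_step; do 2 split=> //; exact: mv_iso. Qed.

Lemma medial_checkerboard (G : scgraph) : checkerboard (medial G).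
Proof. by exists snd; case=> d []. Qed.

Lemma medial_wf (G : scgraph) : gwf G -> wf (medial G).
Proof.
move=> [ginvK [ginv_neq gsgn_inv]].
do 5 (split; first by case=> d []; rewrite //= ?permK ?permKV ?ginvK
                                    ?xpair_eqE ?andbF ?(negbTE (ginv_neq d))).
by case=> d [] /=; rewrite ?gsgn_inv; case: (gsgn G d).
Qed.

Section WellFormedDiagram.

Variable D : diag.
Hypothesis wfD : wf D.

Local Notation s := (sg D).
Local Notation a := (al D).

Lemma alK : involutive a. Proof. by case: wfD. Qed.

Lemma sg4K z : s (s (s (s z))) = z. Proof. by case: wfD => _ [_ []]. Qed.

Lemma sg2_neq z : s (s z) != z. Proof. by case: wfD => _ [_ [_ [_ []]]]. Qed.

Lemma ov_sg z : ov D (s z) = ~~ ov D z. Proof. by case: wfD => _ [_ [_ [_ []]]]. Qed.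

Lemma sg_inj : injective s.
Proof. by move=> x y e; rewrite -(sg4K x) -(sg4K y) e. Qed.

Section CheckerboardGraph.

Variable col : dT D -> bool.
Hypothesis colP : forall z, col (s z) = ~~ col z /\ col (a z) = ~~ col z.

Lemma col_sg z : col (s z) = ~~ col z. Proof. by case: (colP z). Qed.
Lemma col_al z : col (a z) = ~~ col z. Proof. by case: (colP z). Qed.

Definition colored_dart := {z : dT D | col z}.

Lemma colored_rot_subproof (c : colored_dart) : col (s (s (s (a (val c))))).
Proof. by rewrite !col_sg col_al !negbK (valP c). Qed.

Lemma colored_inv_subproof (c : colored_dart) : col (s (s (val c))).
Proof. by rewrite !col_sg negbK (valP c). Qed.

(* Follow the arc from c, then turn clockwise back to the colored corner at
   the next crossing. *)
Definition colored_rot (c : colored_dart) : colored_dart :=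
  Sub _ (colored_rot_subproof c).

Definition colored_inv (c : colored_dart) : colored_dart :=
  Sub _ (colored_inv_subproof c).

Lemma colored_rot_inj : injective colored_rot.
Proof.
move=> c c' /(congr1 val) /= /sg_inj /sg_inj /sg_inj /(inv_inj alK) e.
exact: val_inj.
Qed.

Definition checkerboard_graph : scgraph :=
  SCGraph (perm colored_rot_inj) colored_inv (fun c => ov D (val c)) (nloops D).

Lemma checkerboard_graph_wf : gwf checkerboard_graph.
Proof.
split; first by move=> c; apply: val_inj; rewrite /= sg4K.
split; first by move=> c; apply/eqP => /(congr1 val) /= /eqP; rewrite (negbTE (sg2_neq _)).
by move=> c /=; rewrite !ov_sg negbK.
Qed.

Local Notation G := checkerboard_graph.

(* The medial dart (c, false) is the uncolored dart following c. *)
Definition medial_to_diag (z : gD G * bool) : dT D :=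
  if z.2 then val z.1 else s (val z.1).

Lemma col_sg3 z : ~~ col z -> col (s (s (s z))).
Proof. by rewrite !col_sg !negbK. Qed.

Lemma medial_to_diag_onto z : z \in codom medial_to_diag.
Proof.
apply/codomP; case cz: (col z).
  by exists (Sub z cz, true).
by exists (Sub _ (col_sg3 (negbT cz)), false); rewrite /medial_to_diag /= sg4K.
Qed.

Lemma medial_to_diag_inj : injective medial_to_diag.
Proof.
case=> [c b] [c' b'] e; have eb : b = b'.
  by move: (congr1 col e); rewrite /medial_to_diag; case: b b' {e} => [] [] /=;
    rewrite ?col_sg (valP c) (valP c').
move: e; rewrite /medial_to_diag -eb; case: b {eb} => /= [|/sg_inj] e;
  by congr (_, _); apply: val_inj.
Qed.

Lemma medial_to_diag_bij : bijective medial_to_diag.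
Proof.
exists (fun z => iinv (medial_to_diag_onto z)) => [c|z]; last exact: f_iinv.
by apply: medial_to_diag_inj; rewrite f_iinv.
Qed.

Lemma medial_checkerboard_graph_iso : diso (medial G) D.
Proof.
exists medial_to_diag; split; first exact: medial_to_diag_bij.
split; first by case=> c [].
split.
  case=> c []; rewrite /medial_to_diag /=; first by rewrite permE /= sg4K.
  have /(congr1 val) : grot G (((grot G)^-1)%g c) = c by exact: permKV.
  by rewrite permE /= => <-; rewrite sg4K alK.
split=> //.
by case=> c [] /=; rewrite /medial_to_diag /= ?eqxx ?ov_sg; case: (ov D _).
Qed.

End CheckerboardGraph.

End WellFormedDiagram.

Theorem theorem3p3 (D : diag) (hD : wf D) :
  (exists G : scgraph, gwf G /\ vequiv D (medial G)) <->
  (exists D' : diag, vequiv D D' /\ checkerboard D').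
Proof.
split=> [[G [_ DG]] | [D' [DD' [col colP]]]].
  by exists (medial G); split; last exact: medial_checkerboard.
have wfD' : wf D' by apply/(vequiv_wf DD').
have wfG := checkerboard_graph_wf wfD' colP.
exists (checkerboard_graph wfD' colP); split=> //.
apply: rst_trans DD' _; apply: rst_sym.
exact: diso_vequiv (medial_wf wfG) wfD' (medial_checkerboard_graph_iso wfD' colP).
Qed.
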